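(* Let $K$ be a finite extension of $\mathbb{Q}_p$ with absolute value $|\cdot|_K$, let $X\subseteq K$ be a finite nonempty set, and let $\mathscr{C}$ be a verticial clustering of $X$. For each $C\in\mathscr{C}$ let $a_C\in K$ be a centre of $C$, and set ${\bf a}=(a_C)_{C\in\mathscr{C}}$. Define $$\mathrm{Intra}(\mathscr{C})=\frac{1}{|X|}\sum_{C\in\mathscr{C}}\sum_{x\in C}|x-a_C|_K,\qquad \mathrm{Inter}(\mathscr{C})=\min_{C\neq C'\in\mathscr{C}}|a_C-a_{C'}|_K .$$ Then $\mathrm{Intra}(\mathscr{C})$ and $\mathrm{Inter}(\mathscr{C})$ do not depend on the choice of the cluster centres ${\bf a}$: any two families of centres give the same values.
   Context: A clustering of a finite set $X\subseteq K$ is a partition $\mathscr{C}$ of $X$ into nonempty clusters. For a cluster $C$, let $\mathbb{D}_C$ denote the smallest closed disk $\{y\in K: |y-b|_K\le r\}$ in $K$ containing $C$. The clustering is verticial if every cluster $C\in\mathscr{C}$ corresponds to a vertex of the dendrogram of $X$, i.e. $C=X\cap\mathbb{D}_C$. Given a clustering $\mathscr{C}$ and a family ${\bf a}=(a_C)_{C\in\mathscr{C}}$ of points of $K$, put $E(\mathscr{C},{\bf a})=\sum_{C\in\mathscr{C}}\sum_{x\in C}|x-a_C|_K$. A family of centres of $\mathscr{C}$ is a family ${\bf a}$ minimising $E(\mathscr{C},{\bf a})$ for the given clustering $\mathscr{C}$; equivalently, each $a_C$ minimises $a\mapsto\sum_{x\in C}|x-a|_K$ over $a\in K$. *)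

From HB Require Import structures.
From mathcomp Require Import all_boot all_order all_algebra.
From mathcomp Require Import finmap.
From mathcomp Require Import reals constructive_ereal.
Set Implicit Arguments. Unset Strict Implicit. Unset Printing Implicit Defensive.
Import Order.TTheory GRing.Theory Num.Theory.
Local Open Scope ring_scope.
Local Open Scope fset_scope.

Section Defs.
Variables (K : fieldType) (R : realType) (abs : K -> R).

Definition nonarch_abs : Prop :=
  [/\ forall x, 0 <= abs x,
      forall x, abs x = 0 <-> x = 0,
      forall x y, abs (x * y) = abs x * abs y
    & forall x y, abs (x + y) <= Num.max (abs x) (abs y)].

Definition abs_complete : Prop :=
  forall u : nat -> K,
    (forall e : R, 0 < e -> exists N, forall m n, (N <= m)%N -> (N <= n)%N ->
        abs (u m - u n) < e) ->
    exists l, forall e : R, 0 < e -> exists N, forall n, (N <= n)%N -> abs (u n - l) < e.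

Definition abs_discrete : Prop :=
  exists pi : K, 0 < abs pi < 1 /\
    forall x, x != 0 -> exists n : int, abs x = abs pi ^ n.

(** finite residue field: finitely many representatives of O/m *)
Definition abs_finite_residue : Prop :=
  exists s : seq K, (forall y, y \in s -> abs y <= 1) /\
    forall x, abs x <= 1 -> exists2 y, y \in s & abs (x - y) < 1.

(** (K, abs) is (isomorphic, as a valued field, to) a finite extension of Q_p:
    a complete discretely valued field of characteristic 0 with finite
    residue field of characteristic p. *)
Definition padic_local_field (p : nat) : Prop :=
  [/\ prime p, nonarch_abs, abs_complete, abs_discrete
    & [/\ abs_finite_residue, (p%:R : K) != 0 & abs (p%:R) < 1]].

Definition clustering (X : {fset K}) (Cl : {fset {fset K}}) : Prop :=
  [/\ forall C, C \in Cl -> C != fset0,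
      forall C C', C \in Cl -> C' \in Cl -> C != C' -> C `&` C' = fset0
    & forall x, x \in X <-> exists2 C, C \in Cl & x \in C].

Definition smallest_disk (C : {fset K}) (b : K) (r : R) : Prop :=
  (forall x, x \in C -> abs (x - b) <= r) /\
  forall b' r', (forall x, x \in C -> abs (x - b') <= r') ->
    forall y, abs (y - b) <= r -> abs (y - b') <= r'.

Definition verticial (X : {fset K}) (Cl : {fset {fset K}}) : Prop :=
  clustering X Cl /\
  forall C, C \in Cl -> exists b r, smallest_disk C b r /\
    forall x, x \in X -> (x \in C <-> abs (x - b) <= r).

Definition Eclust (Cl : {fset {fset K}}) (a : {fset K} -> K) : R :=
  \sum_(C <- Cl) \sum_(x <- C) abs (x - a C).

Definition centres (Cl : {fset {fset K}}) (a : {fset K} -> K) : Prop :=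
  forall b : {fset K} -> K, Eclust Cl a <= Eclust Cl b.

Definition Intra (X : {fset K}) (Cl : {fset {fset K}}) (a : {fset K} -> K) : R :=
  (#|` X|%:R)^-1 * Eclust Cl a.

(** minimum over pairs of distinct clusters; +oo if there are fewer than two *)
Definition Inter (Cl : {fset {fset K}}) (a : {fset K} -> K) : \bar R :=
  \big[Order.min/+oo%E]_(C <- Cl) \big[Order.min/+oo%E]_(C' <- Cl | C != C')
     ((abs (a C - a C'))%:E).

End Defs.

From HB Require Import structures.
From mathcomp Require Import all_boot all_order all_algebra.
From mathcomp Require Import finmap.
From mathcomp Require Import reals constructive_ereal.
From mathcomp Require Import ring lra.
Set Implicit Arguments. Unset Strict Implicit. Unset Printing Implicit Defensive.
Import Order.TTheory GRing.Theory Num.Theory.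
Local Open Scope ring_scope.

(* A centre of a cluster C always lies in the smallest disk D_C of C: moving it
   to the centre of D_C strictly decreases every term |x - a_C| otherwise.  For
   two distinct clusters of a verticial clustering the disks D_C, D_C' are
   disjoint, so the larger radius is smaller than the distance of their centres;
   by the ultrametric inequality any point of D_C is then at the same distance
   from any point of D_C'.  Hence |a_C - a_C'| does not depend on the centres,
   and E is the common minimum value.  Only the ultrametric inequality of the
   local field is needed. *)

Section Ultrametric.
Variables (K : fieldType) (R : realType) (abs : K -> R).
Hypothesis NA : nonarch_abs abs.

Lemma absN x : abs (- x) = abs x.
Proof.
case: NA => abs_ge0 abs_eq0 absM _.
have abs1 : abs 1 = 1.
  have := absM 1 1; rewrite mulr1 => e.
  have nz : abs 1 != 0 by apply/eqP => /abs_eq0 /eqP; rewrite oner_eq0.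
  have := abs_ge0 1; nra.
have absN1 : abs (-1) = 1.
  have := absM (-1) (-1); rewrite mulrNN mulr1 abs1 => e.
  have := abs_ge0 (-1); nra.
by rewrite -mulN1r absM absN1 mul1r.
Qed.

Lemma absB x y : abs (x - y) = abs (y - x).
Proof. by rewrite -absN opprB. Qed.

Lemma abs_addl_lt x y : abs x < abs y -> abs (x + y) = abs y.
Proof.
move=> lt_xy; case: NA => _ _ _ abs_add; apply/eqP; rewrite eq_le; apply/andP; split.
  by apply: le_trans (abs_add x y) _; rewrite ge_max lexx (ltW lt_xy).
have := abs_add (x + y) (- x); rewrite addrAC subrr add0r absN.
rewrite le_max => /orP [//|le_yx].
by have := lt_le_trans lt_xy le_yx; rewrite ltxx.
Qed.

Lemma dist_far_disks u u' b b' r r' :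
  abs (u - b) <= r -> abs (u' - b') <= r' ->
  r < abs (b - b') -> r' < abs (b - b') ->
  abs (u - u') = abs (b - b').
Proof.
move=> hu hu' hr hr'.
have -> : u - u' = (u - b) + ((b' - u') + (b - b')) by ring.
have far' : abs ((b' - u') + (b - b')) = abs (b - b').
  by apply: abs_addl_lt; rewrite absB; apply: le_lt_trans hu' hr'.
by rewrite abs_addl_lt far' //; apply: le_lt_trans hu hr.
Qed.

Lemma centre_in_disk (Cl : {fset {fset K}}) a C b r :
  centres abs Cl a -> C \in Cl -> C != fset0 ->
  (forall x, x \in C -> abs (x - b) <= r) ->
  abs (a C - b) <= r.
Proof.
move=> ha hC /fset0Pn [x0 hx0] hin; rewrite leNgt; apply/negP => far.
pose a' D := if D == C then b else a D.
have := ha a'; rewrite /Eclust !(bigD1_seq C) ?fset_uniq //=.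
have -> : \sum_(D <- Cl | D != C) \sum_(x <- D) abs (x - a' D) =
          \sum_(D <- Cl | D != C) \sum_(x <- D) abs (x - a D).
  by apply: eq_bigr => D /negbTE neDC; rewrite /a' neDC.
rewrite lerD2r /a' eqxx; apply/negP; rewrite -ltNge !big_seq.
apply: ltr_sum; first by apply/hasP; exists x0.
move=> x hx; have hxb := hin x hx.
have -> : x - a C = (x - b) + (b - a C) by ring.
rewrite absB in far.
by rewrite (@abs_addl_lt (x - b)) //; apply: le_lt_trans hxb far.
Qed.

Lemma radius_lt_dist_disjoint (X C C' : {fset K}) b b' r r' :
  {subset C <= X} -> C != fset0 -> (C `&` C' = fset0)%fset ->
  (forall x, x \in C -> abs (x - b) <= r) ->
  (forall x, x \in X -> (x \in C' <-> abs (x - b') <= r')) ->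
  r <= r' -> r' < abs (b - b').
Proof.
move=> sub /fset0Pn [x0 hx0] dis hin hC' le_rr'; rewrite ltNge; apply/negP => near.
have hx0' : x0 \in C'.
  apply/(hC' x0 (sub x0 hx0)).
  have -> : x0 - b' = (x0 - b) + (b - b') by ring.
  case: NA => _ _ _ abs_add; apply: le_trans (abs_add _ _) _.
  by rewrite ge_max near (le_trans (hin x0 hx0)).
by have := in_fsetI C C' x0; rewrite dis in_fset0 hx0 hx0'.
Qed.

Lemma centres_dist_eq (X : {fset K}) (Cl : {fset {fset K}}) a a' C C' :
  verticial abs X Cl -> centres abs Cl a -> centres abs Cl a' ->
  C \in Cl -> C' \in Cl -> C != C' -> abs (a C - a C') = abs (a' C - a' C').
Proof.
move=> [[hne hdis hcov] hvert] ha ha' hC hC' neCC'.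
have sub D : D \in Cl -> {subset D <= X} by move=> hD x hx; apply/hcov; exists D.
have [b [r [[hin _] hX]]] := hvert C hC.
have [b' [r' [[hin' _] hX']]] := hvert C' hC'.
have [far far'] : r < abs (b - b') /\ r' < abs (b - b').
  have [le_rr'|lt_r'r] := leP r r'.
    have := radius_lt_dist_disjoint (sub C hC) (hne C hC) (hdis C C' hC hC' neCC')
      hin hX' le_rr'.
    by move=> lt_r'; split=> //; apply: le_lt_trans le_rr' lt_r'.
  have dis' : (C' `&` C = fset0)%fset by rewrite fsetIC; apply: hdis.
  have := radius_lt_dist_disjoint (sub C' hC') (hne C' hC') dis' hin' hX (ltW lt_r'r).
  by rewrite absB => lt_r; split=> //; apply: lt_trans lt_r'r lt_r.
have in_disks c : centres abs Cl c ->
    abs (c C - b) <= r /\ abs (c C' - b') <= r'.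
  by move=> hc; split; apply: centre_in_disk; rewrite ?hne.
have [ha1 ha2] := in_disks a ha; have [ha'1 ha'2] := in_disks a' ha'.
by rewrite (dist_far_disks ha1 ha2) // (dist_far_disks ha'1 ha'2).
Qed.

End Ultrametric.

Local Open Scope fset_scope.

Lemma centres_Eclust_eq (K : fieldType) (R : realType) (abs : K -> R)
    (Cl : {fset {fset K}}) (a b : {fset K} -> K) :
  centres abs Cl a -> centres abs Cl b -> Eclust abs Cl a = Eclust abs Cl b.
Proof. by move=> ha hb; apply/eqP; rewrite eq_le ha hb. Qed.

Theorem lemma2 (p : nat) (K : fieldType) (R : realType) (abs : K -> R)
    (X : {fset K}) (Cl : {fset {fset K}}) (a b : {fset K} -> K) :
  padic_local_field abs p ->
  X != fset0 ->
  verticial abs X Cl ->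
  centres abs Cl a -> centres abs Cl b ->
  Intra abs X Cl a = Intra abs X Cl b /\ Inter abs Cl a = Inter abs Cl b.
Proof.
move=> [_ NA _ _ _] _ hv ha hb; split.
  by rewrite /Intra (centres_Eclust_eq ha hb).
rewrite /Inter; apply: eq_big_seq => C hC.
rewrite big_seq_cond [in RHS]big_seq_cond; apply: eq_bigr => C' /andP [hC' neCC'].
by rewrite (centres_dist_eq NA hv ha hb hC hC' neCC').
Qed.
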